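(* Let $\mathcal{D},\mathcal{T}$ be distributions over a finite set $X$, where $\mathcal{T}=\sum_{i=1}^kc_i\mathcal{T}_i$ is a convex combination of distributions $\mathcal{T}_1,\dots,\mathcal{T}_k$ on $X$ with $c_i>0$ and $\sum_ic_i=1$. Suppose $\|\mathcal{D}-\mathcal{T}_i\|_{\mathtt{TV}}=1-\varepsilon_i$ with $\varepsilon_i\in[0,1/2]$ for each $i$. Then \[ \|\mathcal{D}-\mathcal{T}\|_{\mathtt{TV}}\ \ge\ 1-\sum_{i=1}^k(1+c_i)\varepsilon_i. \]
   Context: Total variation distance: $\|\mathcal{D}_1-\mathcal{D}_2\|_{\mathtt{TV}}=\frac12\sum_{x}|\mathcal{D}_1(x)-\mathcal{D}_2(x)|=\max_{A}(\mathcal{D}_1(A)-\mathcal{D}_2(A))$. *)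

From mathcomp Require Import all_boot all_order all_algebra.
Set Implicit Arguments. Unset Strict Implicit. Unset Printing Implicit Defensive.
Import Order.TTheory GRing.Theory Num.Theory.
Local Open Scope ring_scope.

Definition is_distr (R : realFieldType) (X : finType) (D : X -> R) : Prop :=
  (forall x, 0 <= D x) /\ \sum_(x : X) D x = 1.

Definition tv_dist (R : realFieldType) (X : finType) (D1 D2 : X -> R) : R :=
  2^-1 * \sum_(x : X) `|D1 x - D2 x|.

From mathcomp Require Import all_boot all_order all_algebra.
From mathcomp Require Import lra.
Set Implicit Arguments. Unset Strict Implicit. Unset Printing Implicit Defensive.
Import Order.TTheory GRing.Theory Num.Theory.
Local Open Scope ring_scope.

(* For distributions, [tv_dist P Q = 1 - overlap P Q] with
   [overlap P Q = \sum_x min (P x) (Q x)].  The overlap of D with a mixture is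
   subadditive in the components, and shrinking a component by its weight
   [c i <= 1] only decreases its overlap with D, so
   [overlap D T <= \sum_i overlap D (T i) = \sum_i eps i].  Hence
   [tv_dist D T >= 1 - \sum_i eps i], which is even stronger than claimed. *)

Lemma normB_min (R : realFieldType) (a b : R) :
  `|a - b| = a + b - 2 * Num.min a b.
Proof. rewrite minr_absE; lra. Qed.

Lemma min_addr_le (R : realDomainType) (a b c : R) :
  0 <= a -> 0 <= b -> 0 <= c ->
  Num.min a (b + c) <= Num.min a b + Num.min a c.
Proof.
move=> a0 b0 c0.
by case: (lerP a (b + c)); case: (lerP a b); case: (lerP a c); lra.
Qed.

Lemma min_sumr_le (R : realDomainType) (I : Type) (r : seq I) (a : R)
    (F : I -> R) :
  0 <= a -> (forall i, 0 <= F i) ->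
  Num.min a (\sum_(i <- r) F i) <= \sum_(i <- r) Num.min a (F i).
Proof.
move=> a0 F0; elim: r => [|i r IHr].
  by rewrite !big_nil ge_min lexx orbT.
rewrite !big_cons; apply: le_trans (lerD (lexx _) IHr).
by apply: min_addr_le => //; apply: sumr_ge0.
Qed.

Section Overlap.

Variables (R : realFieldType) (X : finType).

Definition overlap (P Q : X -> R) : R := \sum_x Num.min (P x) (Q x).

Definition mixture (I : finType) (c : I -> R) (T : I -> X -> R) : X -> R :=
  fun x => \sum_i c i * T i x.

Lemma tv_dist_overlap (P Q : X -> R) :
  \sum_x P x = 1 -> \sum_x Q x = 1 -> tv_dist P Q = 1 - overlap P Q.
Proof.
move=> P1 Q1; rewrite /tv_dist /overlap.
under eq_bigr do rewrite normB_min.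
rewrite !big_split /= P1 Q1 sumrN -mulr_sumr; lra.
Qed.

Lemma sum_mixture (I : finType) (c : I -> R) (T : I -> X -> R) :
  (forall i, \sum_x T i x = 1) -> \sum_x mixture c T x = \sum_i c i.
Proof.
move=> T1; rewrite /mixture exchange_big; apply: eq_bigr => i _.
by rewrite -mulr_sumr T1 mulr1.
Qed.

Lemma overlap_mixture_le (I : finType) (D : X -> R) (c : I -> R)
    (T : I -> X -> R) :
  (forall x, 0 <= D x) -> (forall i, 0 <= c i <= 1) ->
  (forall i x, 0 <= T i x) ->
  overlap D (mixture c T) <= \sum_i overlap D (T i).
Proof.
move=> D0 c01 T0; rewrite /overlap /mixture exchange_big /=.
apply: ler_sum => x _.
have cT0 i : 0 <= c i * T i x by case/andP: (c01 i) => c0 _; apply: mulr_ge0.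
apply: le_trans (min_sumr_le _ (D0 x) cT0) _; apply: ler_sum => i _.
by apply: le_min2 => //; apply: ler_piMl => //; case/andP: (c01 i).
Qed.

End Overlap.

Theorem lemma3p3 (R : realFieldType) (X : finType) (k : nat)
  (D : X -> R) (Ti : 'I_k -> X -> R) (c eps : 'I_k -> R) :
  is_distr D ->
  (forall i, is_distr (Ti i)) ->
  (forall i, 0 < c i) ->
  \sum_(i < k) c i = 1 ->
  (forall i, 0 <= eps i <= 2^-1) ->
  (forall i, tv_dist D (Ti i) = 1 - eps i) ->
  tv_dist D (fun x => \sum_(i < k) c i * Ti i x)
    >= 1 - \sum_(i < k) (1 + c i) * eps i.
Proof.
move=> [D0 D1] T_distr c_gt0 c_sum1 eps_bnd tvDT.
have T0 i : forall x, 0 <= Ti i x by case: (T_distr i).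
have T1 i : \sum_x Ti i x = 1 by case: (T_distr i).
have c01 i : 0 <= c i <= 1.
  rewrite ltW //= -c_sum1 (bigD1 i) //= lerDl.
  by apply: sumr_ge0 => j _; apply: ltW.
have overlapDT i : overlap D (Ti i) = eps i.
  by move: (tvDT i); rewrite tv_dist_overlap //; lra.
change (1 - \sum_i (1 + c i) * eps i <= tv_dist D (mixture c Ti)).
rewrite tv_dist_overlap ?sum_mixture //.
have := overlap_mixture_le D0 c01 T0.
under eq_bigr do rewrite overlapDT.
have : \sum_i eps i <= \sum_i (1 + c i) * eps i.
  by apply: ler_sum => i _; case/andP: (eps_bnd i) (c01 i) => e0 _ /andP[c0 _]; nra.
lra.
Qed.
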